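(* If $G$ is a graph with minimum degree $\delta(G)\ge 2$, then $\Gamma_{\rm cer}(G)\le\Gamma(G)$.
   Context: All graphs are finite and simple; $\delta(G)$ is the minimum degree. A set $D\subseteq V_G$ is a dominating set of $G$ if every vertex of $V_G-D$ has a neighbor in $D$; $\Gamma(G)$ is the maximum cardinality of a minimal (with respect to inclusion) dominating set. A set $D$ is a certified dominating set of $G$ if $D$ is dominating and every vertex of $D$ has either zero or at least two neighbors in $V_G-D$; $\Gamma_{\rm cer}(G)$ is the maximum cardinality of a minimal (with respect to inclusion) certified dominating set. *)

From mathcomp Require Import all_boot.
Set Implicit Arguments. Unset Strict Implicit. Unset Printing Implicit Defensive.

Section Graph.
Variable T : finType.
Variable e : rel T.

Definition simple_graph := symmetric e /\ irreflexive e.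

Definition nbhd (v : T) : {set T} := [set u | e v u].

Definition min_deg_ge (k : nat) := forall v : T, k <= #|nbhd v|.

Definition dominating (D : {set T}) : bool :=
  [forall v, (v \notin D) ==> [exists u in D, e v u]].

Definition certified (D : {set T}) : bool :=
  dominating D &&
  [forall v in D, (#|nbhd v :\: D| == 0) || (2 <= #|nbhd v :\: D|)].

Definition Gamma : nat := \max_(D : {set T} | minset dominating D) #|D|.

Definition Gamma_cer : nat := \max_(D : {set T} | minset certified D) #|D|.
End Graph.

From mathcomp Require Import all_boot.
Set Implicit Arguments. Unset Strict Implicit. Unset Printing Implicit Defensive.

(* Let D be a minimal certified dominating set and call a vertex of D enclosed
   when all its neighbours lie in D.  If no vertex is enclosed, every vertex of
   D has at least two neighbours outside D, so every dominating subset of D is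
   certified and D is already a minimal dominating set.  Otherwise we remove
   from D a nonempty set J of enclosed vertices, each keeping a neighbour in
   D \ J: choosing J of maximum size, and then with fewest inner edges, no
   enclosed vertex outside J has exactly one neighbour in J (it could be added
   to J, or swapped with that neighbour), so D \ J is a smaller certified
   dominating set, a contradiction. *)

Lemma card_gt1_neq (T : finType) (S : {set T}) (a : T) :
  1 < #|S| -> exists2 w, w \in S & w != a.
Proof.
case/card_gt1P=> x [y [xS yS xy]].
by case: (eqVneq x a) => [xa | ]; [exists y; rewrite // -xa eq_sym | exists x].
Qed.

Section MinimalCertified.
Variables (T : finType) (e : rel T).
Hypotheses (esym : symmetric e) (eirr : irreflexive e) (deg2 : min_deg_ge e 2).

Lemma nbhd_neq v u : u \in nbhd e v -> u != v.
Proof. by rewrite inE; apply: contraTneq => ->; rewrite eirr. Qed.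

Lemma nbhd_exists_neq v a : exists2 w, w \in nbhd e v & w != a.
Proof. exact: card_gt1_neq (deg2 v). Qed.

Variable D : {set T}.

Definition enclosed : {set T} := [set u in D | nbhd e u \subset D].

Definition removable (J : {set T}) :=
  [&& J \subset enclosed, J != set0 & [forall x in J, exists w in D :\: J, e x w]].

Definition inner_edges (J : {set T}) := #|[set p in setX J J | e p.1 p.2]|.

Lemma enclosed_sub : enclosed \subset D.
Proof. by apply/subsetP=> u; rewrite inE => /andP[]. Qed.

Lemma enclosed_nbhd u : u \in enclosed -> nbhd e u \subset D.
Proof. by rewrite inE => /andP[]. Qed.

Lemma certified_outside_nbhd v :
  certified e D -> v \in D -> v \notin enclosed -> 1 < #|nbhd e v :\: D|.
Proof.
case/andP=> _ /forall_inP/(_ v) cert vD; rewrite inE vD => /subsetPn[w wN wD].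
case/orP: (cert vD) => //; rewrite cards_eq0 => /eqP/setP/(_ w).
by rewrite !inE wD; rewrite inE in wN; rewrite wN.
Qed.

Lemma removable_dominating J :
  dominating e D -> removable J -> dominating e (D :\: J).
Proof.
move=> /forallP domD /and3P[JE _ /forall_inP JD]; apply/forallP=> v.
rewrite inE negb_and negbK; apply/implyP=> /orP[vJ | vD]; first exact: JD.
have /exists_inP[u uD evu] := implyP (domD v) vD.
apply/exists_inP; exists u => //; rewrite inE uD andbT.
apply: contra vD => /(subsetP JE)/enclosed_nbhd/subsetP; apply.
by rewrite inE esym.
Qed.

Section UniqueNeighbourInJ.
Variables (J : {set T}) (x y : T).
Hypothesis yJx : nbhd e y :&: J = [set x].

Lemma unique_nbhd_mem : x \in nbhd e y :&: J.
Proof. by rewrite yJx set11. Qed.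

Lemma unique_nbhd_in z : z \in J -> e z y -> z = x.
Proof. by move=> zJ ezy; apply/set1P; rewrite -yJx !inE esym ezy. Qed.

Lemma removable_setU1 w : removable J -> y \in enclosed ->
  w \in D :\: J -> e x w -> w != y -> removable (y |: J).
Proof.
move=> /and3P[JE _ /forall_inP JD] yE wDJ exw wy; apply/and3P; split.
- by rewrite subUset sub1set yE.
- by apply/set0Pn; exists y; rewrite setU11.
apply/forall_inP=> z; rewrite in_setU1 => /orP[/eqP-> | zJ].
  have [u uN ux] := nbhd_exists_neq y x.
  apply/exists_inP; exists u; last by move: uN; rewrite inE.
  rewrite !inE negb_or (nbhd_neq uN) (subsetP (enclosed_nbhd yE)) // andbT.
  by apply: contra ux => uJ; apply/eqP/set1P; rewrite -yJx inE uN.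
have [-> | zx] := eqVneq z x.
  by apply/exists_inP; exists w => //; move: wDJ; rewrite !inE negb_or wy.
have /exists_inP[u uDJ ezu] := JD z zJ; apply/exists_inP; exists u => //.
move: uDJ; rewrite !inE negb_or => /andP[-> ->]; rewrite !andbT.
apply: contraNneq zx => uy.
by rewrite uy in ezu; rewrite (unique_nbhd_in zJ ezu).
Qed.

Lemma removable_swap : removable J -> y \in enclosed -> y \notin J ->
  removable (y |: (J :\ x)).
Proof.
move=> /and3P[JE _ /forall_inP JD] yE yJ.
have [yx xJ] := setIP unique_nbhd_mem.
have xy : x != y by apply: contraNneq yJ => <-.
apply/and3P; split.
- by rewrite subUset sub1set yE (subset_trans (subsetDl J _)).
- by apply/set0Pn; exists y; rewrite setU11.
apply/forall_inP=> z; rewrite in_setU1 in_setD1 => /orP[/eqP-> | /andP[zx zJ]].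
  apply/exists_inP; exists x; last by rewrite inE in yx.
  by rewrite !inE negb_or xy eqxx (subsetP enclosed_sub) ?(subsetP JE).
have /exists_inP[u uDJ ezu] := JD z zJ; apply/exists_inP; exists u => //.
move: uDJ; rewrite !inE negb_or => /andP[uJ ->]; rewrite (negbTE uJ) andbF /= !andbT.
apply: contraNneq zx => uy.
by rewrite uy in ezu; rewrite (unique_nbhd_in zJ ezu).
Qed.

Lemma inner_edges_swap z : z \in J -> e x z ->
  inner_edges (y |: (J :\ x)) < inner_edges J.
Proof.
move=> zJ exz.
have [yx xJ] := setIP unique_nbhd_mem.
have xy := nbhd_neq yx.
have not_y a b : a \in y |: (J :\ x) -> e b a -> b != y.
  move=> aS; apply: contraTneq => ->; apply/negP => eya.
  move: aS; rewrite in_setU1 in_setD1 => /orP[/eqP ay | /andP[ax aJ]].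
    by rewrite ay eirr in eya.
  by rewrite esym in eya; rewrite (unique_nbhd_in aJ eya) eqxx in ax.
apply: proper_card; apply/properP; split.
  apply/subsetP=> -[a b]; rewrite inE => /andP[/setXP[aS bS] /= eab].
  have /negbTE ay := not_y _ _ bS eab.
  have /negbTE bY := not_y _ _ aS (etrans (esym b a) eab).
  move: aS bS; rewrite !in_setU1 !in_setD1 ay bY => /andP[_ aJ] /andP[_ bJ].
  by rewrite !inE /= aJ bJ.
by exists (x, z); rewrite !inE /= ?xJ ?zJ ?exz // eqxx (negbTE xy).
Qed.
End UniqueNeighbourInJ.

Lemma certified_setD_extremal J : certified e D -> removable J ->
  (forall K, removable K -> #|K| <= #|J|) ->
  (forall K, removable K -> #|K| = #|J| -> inner_edges J <= inner_edges K) ->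
  certified e (D :\: J).
Proof.
move=> certD remJ maxJ minJ; apply/andP; split.
  by apply: removable_dominating remJ; case/andP: certD.
apply/forall_inP=> y; rewrite inE => /andP[yJ yD].
have [yE | yNE] := boolP (y \in enclosed); last first.
  apply/orP; right; apply: leq_trans (certified_outside_nbhd certD yD yNE) _.
  by apply/subset_leq_card/setDS/subsetDl.
have -> : nbhd e y :\: (D :\: J) = nbhd e y :&: J.
  by rewrite setDDr; move: (enclosed_nbhd yE); rewrite -setD_eq0 => /eqP->; rewrite set0U.
have [/cards1P[x yJx] | ] := boolP (#|nbhd e y :&: J| == 1); last by case: #|_| => [|[|n]].
exfalso.
have [_ xJ] := setIP (unique_nbhd_mem yJx).
case: (boolP [exists w in D :\: J, e x w && (w != y)]).
  case/exists_inP=> w wDJ /andP[exw wy].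
  have := maxJ _ (removable_setU1 yJx remJ yE wDJ exw wy).
  by rewrite cardsU1 yJ ltnn.
move/exists_inPn=> noW.
have [z zN zy] := nbhd_exists_neq x y.
have exz : e x z by rewrite inE in zN.
have zJ : z \in J.
  have xE : x \in enclosed by case/and3P: remJ => /subsetP JE _ _; apply: JE.
  apply: contraT => zJ; have := noW z.
  by rewrite exz zy inE zJ (subsetP (enclosed_nbhd xE)) //; apply.
have := minJ _ (removable_swap yJx remJ yE yJ).
rewrite cardsU1 in_setD1 (negbTE yJ) andbF (cardsD1 x J) xJ.
by move/(_ erefl); rewrite leqNgt (inner_edges_swap yJx zJ exz).
Qed.

Lemma removable_set1 u : u \in enclosed -> removable [set u].
Proof.
move=> uE; apply/and3P; split; first by rewrite sub1set.
  by apply/set0Pn; exists u; rewrite set11.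
apply/forall_inP=> _ /set1P->; have [w wN _] := nbhd_exists_neq u u.
apply/exists_inP; exists w; last by rewrite inE in wN.
by rewrite !inE (nbhd_neq wN) (subsetP (enclosed_nbhd uE)).
Qed.

Lemma minset_certified_enclosed : minset (certified e) D -> enclosed = set0.
Proof.
case/minsetP=> certD minD; apply/eqP/set0Pn => -[u /removable_set1 remU].
have [J0 remJ0 maxJ0] := arg_maxnP (fun J : {set T} => #|J|) remU.
have remJ0' : removable J0 && (#|J0| == #|J0|) by rewrite remJ0 eqxx.
have [J /andP[remJ /eqP cardJ] minJ] :=
  @arg_minnP _ J0 (fun J => removable J && (#|J| == #|J0|)) inner_edges remJ0'.
have certJ : certified e (D :\: J).
  apply: certified_setD_extremal => // [K remK | K remK cardK].
    by rewrite cardJ; apply: maxJ0.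
  by apply: minJ; rewrite remK cardK cardJ eqxx.
case/and3P: remJ => /subsetP JE /set0Pn[x xJ] _.
have := subsetP enclosed_sub x (JE x xJ).
by rewrite -(minD _ certJ (subsetDl D J)) inE xJ.
Qed.

Lemma certified_dominating_sub B : certified e D -> enclosed = set0 ->
  dominating e B -> B \subset D -> certified e B.
Proof.
move=> certD noE domB BD; rewrite /certified domB; apply/forall_inP=> v vB.
have vD := subsetP BD v vB.
have vNE : v \notin enclosed by rewrite noE inE.
apply/orP; right; apply: leq_trans (certified_outside_nbhd certD vD vNE) _.
exact/subset_leq_card/setDS.
Qed.

Lemma minset_certified_dominating :
  minset (certified e) D -> minset (dominating e) D.
Proof.
move=> minD; have noE := minset_certified_enclosed minD.
case/minsetP: minD => certD minD; apply/minsetP; split.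
  by case/andP: certD.
by move=> B domB BD; apply: minD (certified_dominating_sub certD noE domB BD) BD.
Qed.

End MinimalCertified.

Theorem lemma3p4 (T : finType) (e : rel T) :
  simple_graph e -> min_deg_ge e 2 -> Gamma_cer e <= Gamma e.
Proof.
move=> [esym eirr] deg2; apply/bigmax_leqP => D minD.
exact: leq_bigmax_cond (minset_certified_dominating esym eirr deg2 minD).
Qed.
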